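(* Let $G$ and $H$ be Markov-equivalent DAGs on the same vertex set, and let $j$ be a sink node of $G$ that is not a sink node of $H$. Suppose $H$ has at least two edges, one of which is $j\to l$. If every edge $i\to k$ of $H$ other than $j\to l$ satisfies $j\in\mathrm{pa}_H(k)$, then $j$ is a source node of a connected component of $H$ that is complete (any two of its vertices are adjacent), and every other connected component of $H$ is an isolated vertex.
   Context: Two DAGs are Markov equivalent iff they have the same skeleton (underlying undirected graph) and the same v-structures (edges $i\to k\leftarrow m$ with $i,m$ nonadjacent). A sink has no outgoing edges; a source has no incoming edges; connected components are those of the skeleton. *)

(* A directed graph on a finite vertex set V is a relation
   G : rel V, with G x y meaning the edge x -> y. *)
From mathcomp Require Import all_boot.
Set Implicit Arguments. Unset Strict Implicit. Unset Printing Implicit Defensive.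

Section DAG.
Variable V : finType.

Definition is_dag (G : rel V) : Prop :=
  forall x y, G x y -> ~~ connect G y x.

Definition adj (G : rel V) : rel V := fun x y => G x y || G y x.

Definition vstruct (G : rel V) (i k m : V) : bool :=
  [&& G i k, G m k, i != m & ~~ adj G i m].

Definition markov_equiv (G H : rel V) : Prop :=
  (forall x y, adj G x y = adj H x y) /\
  (forall i k m, vstruct G i k m = vstruct H i k m).

Definition is_sink (G : rel V) (j : V) : Prop := forall y, ~~ G j y.
Definition is_source (G : rel V) (j : V) : Prop := forall y, ~~ G y j.

Definition same_comp (G : rel V) (x y : V) : bool := connect (adj G) x y.

Definition num_edges (G : rel V) : nat := #|[set e : V * V | G e.1 e.2]|.

End DAG.

(* Every edge of H points into a child of j, so j is a source of H.  An edge
   a -> b with a <> j is then half of a potential v-structure a -> b <- j;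
   since j is a sink of G this v-structure cannot exist in G, so a must be a
   child of j.  Hence every edge lies inside {j} together with its children.
   Finally, two children of j in H are parents of j in G; were they
   nonadjacent they would form a v-structure at j in G, hence in H,
   contradicting that j is a source of H. *)
From mathcomp Require Import all_boot.
Set Implicit Arguments. Unset Strict Implicit. Unset Printing Implicit Defensive.

Section Adjacency.
Variable V : finType.

Lemma adj_sinkE (G : rel V) j x : is_sink G j -> adj G x j = G x j.
Proof. by move=> sj; rewrite /adj (negbTE (sj x)) orbF. Qed.

Lemma adj_sourceE (G : rel V) j x : is_source G j -> adj G x j = G j x.
Proof. by move=> sj; rewrite /adj (negbTE (sj x)). Qed.

End Adjacency.

Section MarkovEquivalentSinkSource.
Variables (V : finType) (G H : rel V) (j : V).
Hypotheses (eqGH : markov_equiv G H) (sink_j : is_sink G j).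

Lemma markov_equiv_sink_adjE x : adj H x j = G x j.
Proof. by rewrite -(proj1 eqGH) adj_sinkE. Qed.

Lemma markov_equiv_sink_coparent_adj a b :
  H a b -> H j b -> a != j -> adj H a j.
Proof.
move=> Hab Hjb naj; apply/negPn/negP=> nadj.
have : vstruct H a b j by rewrite /vstruct Hab Hjb naj nadj.
by rewrite -(proj2 eqGH) => /and4P[_ Gjb _ _]; move: (sink_j b); rewrite Gjb.
Qed.

Hypothesis source_j : is_source H j.

Lemma markov_equiv_sink_source_clique x y :
  (x == j) || H j x -> (y == j) || H j y -> x != y -> adj H x y.
Proof.
case/orP=> [/eqP->|Hjx]; case/orP=> [/eqP->|Hjy]; rewrite ?eqxx //.
- by rewrite /adj Hjy.
- by rewrite /adj Hjx orbT.
move=> nxy; apply/negPn/negP=> nadj.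
have Gxj : G x j by rewrite -markov_equiv_sink_adjE adj_sourceE.
have Gyj : G y j by rewrite -markov_equiv_sink_adjE adj_sourceE.
have : vstruct G x j y by rewrite /vstruct Gxj Gyj nxy (proj1 eqGH) nadj.
by rewrite (proj2 eqGH) => /and4P[Hxj _ _ _]; move: (source_j x); rewrite Hxj.
Qed.

End MarkovEquivalentSinkSource.

Section EdgesIntoChildren.
Variables (V : finType) (H : rel V) (j l : V).
Hypothesis Hjl : H j l.
Hypothesis edge_to_child : forall i k, H i k -> (i, k) != (j, l) -> H j k.

Lemma edge_to_child_of a b : H a b -> H j b.
Proof. by move=> Hab; case: (eqVneq (a, b) (j, l)) => [[_ ->]|/(edge_to_child Hab)]. Qed.

Lemma dag_edge_to_child_source : is_dag H -> is_source H j.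
Proof.
move=> dH y; apply/negP=> /edge_to_child_of Hjj.
by move: (dH _ _ Hjj); rewrite connect0.
Qed.

Hypothesis edge_from_closed_nbhd : forall a b, H a b -> (a == j) || H j a.

Lemma adj_closed_nbhd x y : adj H x y -> ((x == j) || H j x) && ((y == j) || H j y).
Proof.
by case/orP=> Hxy; rewrite (edge_from_closed_nbhd Hxy) (edge_to_child_of Hxy) orbT.
Qed.

Lemma same_compE x : same_comp H j x = (x == j) || H j x.
Proof.
apply/idP/idP.
  case/connectP=> p; elim/last_ind: p => [_ ->|p z _]; first by rewrite eqxx.
  by rewrite rcons_path last_rcons => /andP[_ /adj_closed_nbhd/andP[_ Hz]] ->.
case/orP=> [/eqP->|Hjx]; first exact: connect0.
by apply: connect1; rewrite /adj Hjx.
Qed.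

End EdgesIntoChildren.

Theorem mainTheorem17 (V : finType) (G H : rel V) (j l : V) :
  is_dag G -> is_dag H -> markov_equiv G H ->
  is_sink G j -> ~ is_sink H j ->
  2 <= num_edges H -> H j l ->
  (forall i k, H i k -> (i, k) != (j, l) -> H j k) ->
  [/\ is_source H j,
      (forall x y, same_comp H j x -> same_comp H j y -> x != y -> adj H x y)
    & (forall x, ~~ same_comp H j x -> forall y, ~~ adj H x y)].
Proof.
move=> _ dH eqGH sink_j _ _ Hjl edge_to_child.
have source_j := dag_edge_to_child_source Hjl edge_to_child dH.
have edge_from_closed_nbhd a b : H a b -> (a == j) || H j a.
  move=> Hab; case: eqVneq => //= naj.
  rewrite -(adj_sourceE _ source_j).
  exact: (markov_equiv_sink_coparent_adj eqGH sink_j Hab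
            (edge_to_child_of Hjl edge_to_child Hab) naj).
have compE := same_compE Hjl edge_to_child edge_from_closed_nbhd.
split=> // [x y|x]; rewrite !compE.
  exact: (markov_equiv_sink_source_clique eqGH sink_j source_j).
move=> nx y; apply/negP=> /(adj_closed_nbhd Hjl edge_to_child edge_from_closed_nbhd).
by rewrite (negbTE nx).
Qed.
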